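(* Let $\mathbb{H}$ be a finite-dimensional complex Hilbert space and let $t\mapsto H(t)$ be a continuous family of self-adjoint operators on $\mathbb{H}$, with propagator $\{U(t,s)\}_{t,s\in\mathbb{R}}$ (unitaries with $U(t,t)=I$, $U(t,r)U(r,s)=U(t,s)$ and $\mathrm{i}\frac{d}{dt}U(t,s)=H(t)U(t,s)$). Let $X_0=\sum_{j=1}^n\lambda_jE_j$ be a self-adjoint operator with distinct eigenvalues $\lambda_1,\dots,\lambda_n$ and spectral projections $E_j$, and suppose there is $T>0$ with $U(0,T)E_jU(T,0)=E_j$ for all $1\le j\le n$. Fix $j$, let $d_j=\dim E_j[\mathbb{H}]$, let $\{\psi^{(j)}_k:1\le k\le d_j\}$ be an orthonormal basis of $E_j[\mathbb{H}]$, and set $\psi^{(j)}_k(t)=U(0,t)\psi^{(j)}_k$. Let $C_j(t)=[c^{(j)}_{mk}(t)]_{m,k=1}^{d_j}$ with $c^{(j)}_{mk}(t)=\langle\psi^{(j)}_m,H(t)\psi^{(j)}_k\rangle$, let $\tilde V_j(t)=[\tilde v^{(j)}_{mk}(t)]$ be the solution of $\mathrm{i}\frac{d}{dt}\tilde V_j(t)=C_j(t)\tilde V_j(t)$ with $\tilde V_j(0)=I_{d_j}$, and define $\tilde\psi^{(j)}_k(t)=\sum_{m=1}^{d_j}\tilde v^{(j)}_{mk}(t)\psi^{(j)}_m(t)$. Then for all $t$ and all $1\le m,k\le d_j$, $$\Big\langle \tilde\psi^{(j)}_m(t),\frac{d}{dt}\tilde\psi^{(j)}_k(t)\Big\rangle=0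 .$$
   Context: Inner products are linear in the second argument. $U(0,t)=U(t,0)^{-1}$. The matrices $C_j(t)$ are Hermitian, so $\tilde V_j(t)$ is unitary and $\{\tilde\psi^{(j)}_k(t)\}_k$ is an orthonormal basis of $U(0,t)E_jU(t,0)[\mathbb{H}]$. *)

From HB Require Import structures.
From mathcomp Require Import all_boot all_order all_algebra.
From mathcomp Require Import all_classical all_reals all_analysis.
From mathcomp Require Import complex.

Set Implicit Arguments.
Unset Strict Implicit.
Unset Printing Implicit Defensive.

Import Order.TTheory GRing.Theory Num.Theory.
Import numFieldNormedType.Exports.
Local Open Scope ring_scope.
Local Open Scope sesquilinear_scope.

Definition cinner (R : rcfType) (N : nat) (u v : 'cV[R[i]]_N) : R[i] :=
  \sum_(l < N) (Num.conj (u l 0)) * v l 0.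

Definition unitary_op (R : rcfType) (N : nat) (A : 'M[R[i]]_N) : Prop :=
  A^t* *m A = 1%:M /\ A *m A^t* = 1%:M.

Definition selfadjmx (R : rcfType) (N : nat) (A : 'M[R[i]]_N) : Prop :=
  A^t* = A.

Definition mx_continuous (R : realType) (m n : nat) (F : R -> 'M[R[i]]_(m, n)) : Prop :=
  forall a b, continuous (fun s : R => complex.Re (F s a b)) /\
              continuous (fun s : R => complex.Im (F s a b)).

Definition mx_has_deriv (R : realType) (m n : nat) (F : R -> 'M[R[i]]_(m, n))
  (t : R) (D : 'M[R[i]]_(m, n)) : Prop :=
  forall a b, is_derive t 1 (fun s : R => complex.Re (F s a b)) (complex.Re (D a b)) /\
              is_derive t 1 (fun s : R => complex.Im (F s a b)) (complex.Im (D a b)).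

Definition orthoprojmx (R : rcfType) (N : nat) (E : 'M[R[i]]_N) : Prop :=
  E *m E = E /\ E^t* = E.

From HB Require Import structures.
From mathcomp Require Import all_boot all_order all_algebra.
From mathcomp Require Import all_classical all_reals all_analysis.
From mathcomp Require Import complex.
From mathcomp Require Import ring.

Set Implicit Arguments.
Unset Strict Implicit.
Unset Printing Implicit Defensive.

Import Order.TTheory GRing.Theory Num.Theory.
Import numFieldNormedType.Exports.
Local Open Scope ring_scope.
Local Open Scope sesquilinear_scope.

(* Put Psi := [psi_1 ... psi_d] and W(t) := U(0,t) Psi V(t), whose columns are the
   tilde psi_k(t); the claim is W(t)^* W'(t) = 0.  Since U(0,t) = U(t,0)^* and
   H is self-adjoint, d/dt U(0,t) = i U(0,t) H(t), while V' = -i (Psi^* H Psi) V.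
   Using U(0,t)^* U(0,t) = 1 and Psi^* Psi = 1 the two terms of W^* W' become
   i V^* Psi^* H Psi V and -i V^* Psi^* H Psi V, which cancel. *)

Section ComplexDerivative.
Context {R : realType}.
Implicit Types (f g : R -> R[i]) (t : R) (a b : R[i]).

Definition is_cderive f t a :=
  is_derive t 1 (fun s => complex.Re (f s)) (complex.Re a) /\
  is_derive t 1 (fun s => complex.Im (f s)) (complex.Im a).

Lemma is_cderive_cst a t : is_cderive (fun=> a) t 0.
Proof. by split; exact: is_derive_cst. Qed.

Lemma is_cderiveD f g t a b :
  is_cderive f t a -> is_cderive g t b -> is_cderive (f \+ g) t (a + b).
Proof.
move=> [fRe fIm] [gRe gIm]; split.
- have -> : (fun s => complex.Re ((f \+ g) s)) =
             (fun s => complex.Re (f s) + complex.Re (g s)).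
    by apply/funext => s /=; case: (f s) (g s) => ? ? [].
  by move: (is_deriveD fRe gRe); case: a b {fRe fIm gRe gIm} => ? ? [].
- have -> : (fun s => complex.Im ((f \+ g) s)) =
             (fun s => complex.Im (f s) + complex.Im (g s)).
    by apply/funext => s /=; case: (f s) (g s) => ? ? [].
  by move: (is_deriveD fIm gIm); case: a b {fRe fIm gRe gIm} => ? ? [].
Qed.

Lemma is_cderive_sum (I : Type) (r : seq I) (F : I -> R -> R[i]) (dF : I -> R[i]) t :
  (forall l, is_cderive (F l) t (dF l)) ->
  is_cderive (fun s => \sum_(l <- r) F l s) t (\sum_(l <- r) dF l).
Proof.
move=> dFl; elim: r => [|l r IHr].
  by under eq_fun do rewrite big_nil; rewrite big_nil; exact: is_cderive_cst.
by under eq_fun do rewrite big_cons; rewrite big_cons; exact: is_cderiveD.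
Qed.

Lemma is_cderiveM f g t a b :
  is_cderive f t a -> is_cderive g t b -> is_cderive (f \* g) t (f t * b + a * g t).
Proof.
move=> [fRe fIm] [gRe gIm]; split.
- have -> : (fun s => complex.Re ((f \* g) s)) =
             (fun s => complex.Re (f s) * complex.Re (g s)
                       - complex.Im (f s) * complex.Im (g s)).
    by apply/funext => s /=; case: (f s) (g s) => ? ? [].
  apply: is_derive_eq (is_deriveB (is_deriveM fRe gRe) (is_deriveM fIm gIm)) _.
  by case: (f t) (g t) a b {fRe fIm gRe gIm} => ? ? [? ?] [? ?] [? ?] /=;
    rewrite /GRing.scale /=; ring.
- have -> : (fun s => complex.Im ((f \* g) s)) =
             (fun s => complex.Re (f s) * complex.Im (g s)
                       + complex.Im (f s) * complex.Re (g s)).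
    by apply/funext => s /=; case: (f s) (g s) => ? ? [].
  apply: is_derive_eq (is_deriveD (is_deriveM fRe gIm) (is_deriveM fIm gRe)) _.
  by case: (f t) (g t) a b {fRe fIm gRe gIm} => ? ? [? ?] [? ?] [? ?] /=;
    rewrite /GRing.scale /=; ring.
Qed.

Lemma is_cderive_conj f t a :
  is_cderive f t a -> is_cderive (fun s => Num.conj (f s)) t (Num.conj a).
Proof.
move=> [fRe fIm]; split.
- have -> : (fun s => complex.Re (Num.conj (f s))) = (fun s => complex.Re (f s)).
    by apply/funext => s; case: (f s).
  by case: a fRe fIm.
- have -> : (fun s => complex.Im (Num.conj (f s))) = (fun s => - complex.Im (f s)).
    by apply/funext => s; case: (f s).
  by move: (is_deriveN fIm); case: a {fRe fIm}.
Qed.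

End ComplexDerivative.

Section MatrixDerivative.
Context {R : realType}.

Lemma mx_has_derivP m n (F : R -> 'M[R[i]]_(m, n)) t D :
  mx_has_deriv F t D <-> forall a b, is_cderive (fun s => F s a b) t (D a b).
Proof. by []. Qed.

Lemma mx_has_deriv_cst m n (A : 'M[R[i]]_(m, n)) t : mx_has_deriv (fun=> A) t 0.
Proof. by apply/mx_has_derivP => a b; rewrite mxE; exact: is_cderive_cst. Qed.

Lemma mx_has_derivM m n p (F : R -> 'M[R[i]]_(m, n)) (G : R -> 'M[R[i]]_(n, p)) t DF DG :
  mx_has_deriv F t DF -> mx_has_deriv G t DG ->
  mx_has_deriv (fun s => F s *m G s) t (F t *m DG + DF *m G t).
Proof.
move=> dF dG; apply/mx_has_derivP => a b.
have -> : (fun s => (F s *m G s) a b) = (fun s => \sum_l F s a l * G s l b).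
  by apply/funext => s; rewrite mxE.
rewrite !mxE -big_split /=.
by apply: is_cderive_sum => l; apply: is_cderiveM; [exact: dF | exact: dG].
Qed.

Lemma mx_has_deriv_adj m n (F : R -> 'M[R[i]]_(m, n)) t D :
  mx_has_deriv F t D -> mx_has_deriv (fun s => (F s)^t*) t (D^t*).
Proof.
move=> dF; apply/mx_has_derivP => a b.
have -> : (fun s => (F s)^t* a b) = (fun s => Num.conj (F s b a)).
  by apply/funext => s; rewrite !mxE.
by rewrite !mxE; apply: is_cderive_conj; exact: dF.
Qed.

Lemma mx_has_deriv_col m n (F : R -> 'M[R[i]]_(m, n)) t D k :
  mx_has_deriv F t D -> mx_has_deriv (fun s => col k (F s)) t (col k D).
Proof.
move=> dF; apply/mx_has_derivP => a b.
have -> : (fun s => col k (F s) a b) = (fun s => F s a k).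
  by apply/funext => s; rewrite !mxE.
by rewrite !mxE; exact: dF.
Qed.

End MatrixDerivative.

Section Columns.
Context {C : comPzRingType}.

Lemma col_mulmx m n p (A : 'M[C]_(m, n)) (B : 'M[C]_(n, p)) k :
  col k (A *m B) = A *m col k B.
Proof. by rewrite !colE mulmxA. Qed.

Lemma col_mulmx_sum m n p (A : 'M[C]_(m, n)) (B : 'M[C]_(n, p)) k :
  col k (A *m B) = \sum_l B l k *: col l A.
Proof.
apply/matrixP => a b; rewrite !mxE summxE; apply: eq_bigr => l _.
by rewrite !mxE mulrC.
Qed.

Definition mx_of_cols {N d} (psi : 'I_d -> 'cV[C]_N) : 'M[C]_(N, d) :=
  \matrix_(l, q) psi q l 0.

Lemma col_mx_of_cols N d (psi : 'I_d -> 'cV[C]_N) k : col k (mx_of_cols psi) = psi k.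
Proof. by apply/matrixP => a b; rewrite !mxE (ord1 b). Qed.

End Columns.

Section Adjoint.
Context {C : numClosedFieldType}.

Lemma adjmxM m n p (A : 'M[C]_(m, n)) (B : 'M[C]_(n, p)) : (A *m B)^t* = B^t* *m A^t*.
Proof. by rewrite trmx_mul map_mxM. Qed.

Lemma adjmxZ m n (c : C) (A : 'M[C]_(m, n)) : (c *: A)^t* = c^* *: A^t*.
Proof. by apply/matrixP => a b; rewrite !mxE rmorphM. Qed.

Lemma propagator_adj (T : Type) N (U : T -> T -> 'M[C]_N) :
  (forall t s, U t s *m (U t s)^t* = 1%:M) -> (forall t, U t t = 1%:M) ->
  (forall t r s, U t r *m U r s = U t s) ->
  forall t s, U t s = (U s t)^t*.
Proof.
move=> U_unitary U_refl U_comp t s.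
by rewrite -[U t s]mulmx1 -(U_unitary s t) mulmxA U_comp U_refl mul1mx.
Qed.

End Adjoint.

Lemma cinner_col (R : rcfType) N m n (X : 'M[R[i]]_(N, m)) (Y : 'M[R[i]]_(N, n)) a b :
  cinner (col a X) (col b Y) = (X^t* *m Y) a b.
Proof. by rewrite /cinner !mxE; apply: eq_bigr => l _; rewrite !mxE. Qed.

Lemma scale_i_solve (R : rcfType) m n (D X : 'M[R[i]]_(m, n)) :
  'i%C *: D = X -> D = - 'i%C *: X.
Proof. by move=> <-; rewrite scalerA mulNr -expr2 sqr_i opprK scale1r. Qed.

Lemma conjNi (R : rcfType) : Num.conj (- 'i%C) = 'i%C :> R[i].
Proof. by apply/eqP; rewrite eq_complex /= !oppr0 opprK !eqxx. Qed.

Lemma mx_has_deriv_propagator_adj (R : realType) N (H : R -> 'M[R[i]]_N)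
    (U : R -> R -> 'M[R[i]]_N) s t :
  selfadjmx (H t) -> (forall r, U s r = (U r s)^t*) ->
  (exists D, mx_has_deriv (fun r => U r s) t D /\ 'i%C *: D = H t *m U t s) ->
  mx_has_deriv (U s) t ('i%C *: (U s t *m H t)).
Proof.
move=> H_sa U_adj [D [dU eD]].
rewrite (_ : 'i%C *: _ = D^t*); last first.
  by rewrite (scale_i_solve eD) adjmxZ adjmxM H_sa conjNi -U_adj.
have -> : U s = fun r => (U r s)^t* by apply/funext => r; exact: U_adj.
exact: mx_has_deriv_adj.
Qed.

Lemma frame_deriv_orthogonal (R : realType) N d (A : R -> 'M[R[i]]_N) (K : 'M[R[i]]_N)
    (Psi : 'M[R[i]]_(N, d)) (V : R -> 'M[R[i]]_d) t DV :
  mx_has_deriv A t ('i%C *: (A t *m K)) -> (A t)^t* *m A t = 1%:M ->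
  Psi^t* *m Psi = 1%:M ->
  mx_has_deriv V t DV -> 'i%C *: DV = Psi^t* *m K *m Psi *m V t ->
  exists2 DW, mx_has_deriv (fun s => A s *m Psi *m V s) t DW &
              (A t *m Psi *m V t)^t* *m DW = 0.
Proof.
move=> dA A_isom Psi_isom dV eDV.
eexists; first exact: mx_has_derivM (mx_has_derivM dA (mx_has_deriv_cst Psi t)) dV.
have cancelA p (X : 'M[R[i]]_(p, N)) : X *m (A t)^t* *m A t = X.
  by rewrite -mulmxA A_isom mulmx1.
have cancelPsi p (X : 'M[R[i]]_(p, d)) : X *m Psi^t* *m Psi = X.
  by rewrite -mulmxA Psi_isom mulmx1.
rewrite (scale_i_solve eDV) mulmx0 add0r !adjmxM mulmxDr.
rewrite -!scalemxAl -!scalemxAr !mulmxA cancelA cancelPsi.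
by rewrite scaleNr addNr.
Qed.

Theorem proposition2p1 (R : realType) (N : nat)
  (H : R -> 'M[R[i]]_N) (U : R -> R -> 'M[R[i]]_N)
  (n : nat) (lambda : 'I_n -> R) (E : 'I_n -> 'M[R[i]]_N) (X0 : 'M[R[i]]_N)
  (j : 'I_n) (d : nat) (psi : 'I_d -> 'cV[R[i]]_N) (V : R -> 'M[R[i]]_d) :
  (* H is a continuous family of self-adjoint operators *)
  mx_continuous H ->
  (forall t, selfadjmx (H t)) ->
  (* U is its propagator *)
  (forall t s, unitary_op (U t s)) ->
  (forall t, U t t = 1%:M) ->
  (forall t r s, U t r *m U r s = U t s) ->
  (forall t s, exists D, mx_has_deriv (fun tau => U tau s) t D /\
                         (Complex 0 1) *: D = H t *m U t s) ->
  (* X0 = sum_j lambda_j E_j, distinct eigenvalues, spectral projections E_j *)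
  injective lambda ->
  (forall l, orthoprojmx (E l)) ->
  (forall l, E l != 0) ->
  (forall l l', l != l' -> E l *m E l' = 0) ->
  \sum_(l < n) E l = 1%:M ->
  X0 = \sum_(l < n) (Complex (lambda l) 0) *: E l ->
  (* periodicity of the spectral projections *)
  (exists T : R, 0 < T /\ forall l, U 0 T *m E l *m U T 0 = E l) ->
  (* d = dim E_j[H] and psi is an orthonormal basis of E_j[H] *)
  d = \rank (E j) ->
  (forall k, E j *m psi k = psi k) ->
  (forall m k, cinner (psi m) (psi k) = (m == k)%:R) ->
  (* V solves i V' = C_j V, V(0) = I, with C_j(t)_{mk} = <psi_m, H(t) psi_k> *)
  V 0 = 1%:M ->
  (forall t, exists D, mx_has_deriv V t D /\
     (Complex 0 1) *: D =
       (\matrix_(m < d, k < d) cinner (psi m) (H t *m psi k)) *m V t) ->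
  (* conclusion, with psi_k(t) = U(0,t) psi_k and
     tilde psi_k(t) = sum_m V(t)_{mk} psi_m(t) *)
  let psit := fun (k : 'I_d) (t : R) => U 0 t *m psi k in
  let tpsi := fun (k : 'I_d) (t : R) => \sum_(m < d) V t m k *: psit m t in
  forall (t : R) (m k : 'I_d),
    exists D, mx_has_deriv (tpsi k) t D /\ cinner (tpsi m t) D = 0.
Proof.
move=> _ H_sa U_unitary U_refl U_comp U_deriv _ _ _ _ _ _ _ _ _ psi_orthonormal _
  V_deriv psit tpsi t m k.
pose Psi := mx_of_cols psi.
have U_adj := propagator_adj (fun t s => (U_unitary t s).2) U_refl U_comp.
have U_isom : (U 0 t)^t* *m U 0 t = 1%:M by rewrite -U_adj U_comp U_refl.
have Psi_isom : Psi^t* *m Psi = 1%:M.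
  by apply/matrixP => a b; rewrite -cinner_col !col_mx_of_cols psi_orthonormal mxE.
have C_eq : \matrix_(a, b) cinner (psi a) (H t *m psi b) = Psi^t* *m H t *m Psi.
  by apply/matrixP => a b; rewrite -mulmxA -cinner_col col_mulmx !col_mx_of_cols mxE.
have [DV [dV eDV]] := V_deriv t; rewrite C_eq in eDV.
have dU := mx_has_deriv_propagator_adj (H_sa t) (U_adj 0) (U_deriv t 0).
have [DW dW W_orth] := frame_deriv_orthogonal dU U_isom Psi_isom dV eDV.
have tpsi_col q : tpsi q = fun s => col q (U 0 s *m Psi *m V s).
  apply/funext => s; rewrite -mulmxA col_mulmx col_mulmx_sum mulmx_sumr.
  by apply: eq_bigr => l _; rewrite col_mx_of_cols scalemxAr.
exists (col k DW); split; first by rewrite tpsi_col; exact: mx_has_deriv_col.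
by rewrite !tpsi_col cinner_col W_orth mxE.
Qed.
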